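(* Let $n_0,n_1$ be positive integers with $\max\{n_0,n_1\}>1$ and let $r>1$ be an integer. Then every subset $\mathcal{Z}\subseteq\{1,2,\dots,r-1\}$ is admissible for $(n_0,n_1,r)$.
   Context: For integers $n,\ell>0$ and a finite-support integer sequence $\mu=(\mu_i)_{i\ge1}$, $\mathsf{K}_\ell(\mu,n)=n^\ell-\sum_{i=1}^{\ell}\mu_i n^{\ell-i}$ (with $0^0=1$). For a pair $(\eta,\omega)$ of nonnegative integer sequences $(\eta_\ell)_{\ell\ge1},(\omega_\ell)_{\ell\ge1}$ with finite support, let $\mathsf{K}^\pm_\ell=\mathsf{K}_\ell(\eta\pm\omega,n_0\pm n_1)$, let $\mathsf{r}(\eta,\omega)$ be the largest index in the union of their supports, and $\mathsf{K}^\pm=\mathsf{K}^\pm_{\mathsf{r}(\eta,\omega)}$. A subset $\mathcal{Z}\subseteq\{1,\dots,r-1\}$ is admissible for $(n_0,n_1,r)$ if there exists such a pair $(\eta,\omega)$ with $\mathsf{r}(\eta,\omega)=r$ and $\mathsf{K}^+=\mathsf{K}^-=0$ such that, for $\ell\in\{1,\dots,r-1\}$, the inequality $\mathsf{K}^+_\ell\ge|\mathsf{K}^-_\ell|$ fails exactly when $\ell\in\mathcal{Z}$. *)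

From mathcomp Require Import all_boot all_order all_algebra.
Set Implicit Arguments. Unset Strict Implicit. Unset Printing Implicit Defensive.
Import Order.TTheory GRing.Theory Num.Theory.
Local Open Scope ring_scope.

(* Integer sequences are functions nat -> int / nat -> nat indexed from 1;
   the value at index 0 is irrelevant and never used. *)

Definition Kfun (l : nat) (mu : nat -> int) (n : int) : int :=
  n ^+ l - \sum_(1 <= i < l.+1) mu i * n ^+ (l - i).

Definition fin_supp (s : nat -> nat) : Prop :=
  exists N : nat, forall i : nat, (N < i)%N -> s i = 0%N.

Definition rank_is (eta omega : nat -> nat) (r : nat) : Prop :=
  (1 <= r)%N /\ (eta r <> 0%N \/ omega r <> 0%N) /\
  (forall i : nat, (r < i)%N -> eta i = 0%N /\ omega i = 0%N).

Definition Kplus (eta omega : nat -> nat) (n0 n1 : nat) (l : nat) : int :=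
  Kfun l (fun i => (eta i)%:Z + (omega i)%:Z) (n0%:Z + n1%:Z).

Definition Kminus (eta omega : nat -> nat) (n0 n1 : nat) (l : nat) : int :=
  Kfun l (fun i => (eta i)%:Z - (omega i)%:Z) (n0%:Z - n1%:Z).

Definition admissible (n0 n1 r : nat) (Z : pred nat) : Prop :=
  exists eta omega : nat -> nat,
    [/\ fin_supp eta /\ fin_supp omega, rank_is eta omega r,
        Kplus eta omega n0 n1 r = 0, Kminus eta omega n0 n1 r = 0 &
        forall l : nat, (1 <= l)%N -> (l <= r - 1)%N ->
          (~ (`|Kminus eta omega n0 n1 l| <= Kplus eta omega n0 n1 l) <-> Z l)].

(* Put x = (K^+ + K^-)/2 and y = (K^+ - K^-)/2 (K^+ and K^- have the same
   parity).  Then K^+_0 = K^-_0 = 1 becomes (x, y) = (1, 0), the recursions for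
   K^+ and K^- become x' = n0 x + n1 y - eta, y' = n1 x + n0 y - omega, and
   |K^-| <= K^+ says exactly that x and y are both nonnegative.  So it suffices
   to steer (x, y) by nonnegative decrements of its image
   (n0 x + n1 y, n1 x + n0 y) inside the cone where this image is nonnegative
   and x + y >= 1: at an index outside Z take no decrement, at an index in Z
   push the smaller coordinate of the image down to -1, and at index r
   decrement the image all the way to (0, 0).  The only estimate needed is that the larger coordinate
   of the image of a point with x + y >= 1 is at least max(n0, n1) >= 2, which
   keeps the corners (-1, m) and (m, -1) inside the cone. *)

From mathcomp Require Import all_boot all_order all_algebra.
From mathcomp Require Import zify ring lra.
Set Implicit Arguments. Unset Strict Implicit. Unset Printing Implicit Defensive.
Import Order.TTheory GRing.Theory Num.Theory.

Local Open Scope ring_scope.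

Lemma Kfun0 (mu : nat -> int) (n : int) : Kfun 0 mu n = 1.
Proof. by rewrite /Kfun big_geq // subr0 expr0. Qed.

Lemma KfunS (l : nat) (mu : nat -> int) (n : int) :
  Kfun l.+1 mu n = n * Kfun l mu n - mu l.+1.
Proof.
rewrite /Kfun big_nat_recr //= subnn expr0 mulr1 mulrBr -exprS opprD addrA.
congr (_ - _ - _); rewrite mulr_sumr; apply: eq_big_nat => i /andP[_ hi].
by rewrite subSn // exprS mulrCA.
Qed.

Lemma KplusS (eta omega : nat -> nat) (n0 n1 l : nat) :
  Kplus eta omega n0 n1 l.+1 =
  (n0%:Z + n1%:Z) * Kplus eta omega n0 n1 l - ((eta l.+1)%:Z + (omega l.+1)%:Z).
Proof. exact: KfunS. Qed.

Lemma KminusS (eta omega : nat -> nat) (n0 n1 l : nat) :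
  Kminus eta omega n0 n1 l.+1 =
  (n0%:Z - n1%:Z) * Kminus eta omega n0 n1 l - ((eta l.+1)%:Z - (omega l.+1)%:Z).
Proof. exact: KfunS. Qed.

Lemma normB_le_add (R : realDomainType) (x y : R) :
  (`|x - y| <= x + y) = (0 <= x) && (0 <= y).
Proof. by rewrite ler_norml; apply/andP/andP => -[? ?]; split; lra. Qed.

Section Dynamics.

Variables n0 n1 : nat.

Definition transfer (s : int * int) : int * int :=
  (n0%:Z * s.1 + n1%:Z * s.2, n1%:Z * s.1 + n0%:Z * s.2).
Arguments transfer : simpl never.

Definition jump (s : int * int) : int * int :=
  let: (a, b) := transfer s in if a < b then (-1, b) else (a, -1).

Definition next (z : bool) (s : int * int) : int * int :=
  if z then jump s else transfer s.

Definition in_cone (s : int * int) : Prop :=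
  [/\ 0 <= (transfer s).1, 0 <= (transfer s).2 & 1 <= s.1 + s.2].

Definition deficit (s : nat -> int * int) (l : nat) : int * int :=
  ((transfer (s l.-1)).1 - (s l).1, (transfer (s l.-1)).2 - (s l).2).

Lemma Kplus_Kminus_deficit (eta omega : nat -> nat) (s : nat -> int * int)
    (L : nat) :
  s 0%N = (1, 0) ->
  (forall i, (0 < i <= L)%N ->
     (eta i)%:Z = (deficit s i).1 /\ (omega i)%:Z = (deficit s i).2) ->
  forall l, (l <= L)%N ->
    Kplus eta omega n0 n1 l = (s l).1 + (s l).2 /\
    Kminus eta omega n0 n1 l = (s l).1 - (s l).2.
Proof.
move=> s0 hdef; elim=> [|l IHl] hl.
  by rewrite /Kplus /Kminus !Kfun0 s0 /=; split; ring.
have [Kp Km] := IHl (ltnW hl).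
have [he hw] := hdef l.+1 hl.
by rewrite KplusS KminusS Kp Km he hw /deficit /transfer /=; split; ring.
Qed.

Lemma transfer_max_ge (s : int * int) : 1 <= s.1 + s.2 ->
  (maxn n0 n1)%:Z <= (transfer s).1 \/ (maxn n0 n1)%:Z <= (transfer s).2.
Proof.
case: s => x y /= hs; rewrite /transfer /=.
have [hx|hx] : 1 <= x \/ x <= 0 by lia.
all: by case: (leqP n1 n0) => hn; nia.
Qed.

Hypotheses (n0_gt0 : (0 < n0)%N) (n1_gt0 : (0 < n1)%N)
  (max_gt1 : (1 < maxn n0 n1)%N).

Lemma transfer_in_cone (s : int * int) : in_cone s -> in_cone (transfer s).
Proof. by case: s => x y; rewrite /in_cone /transfer /= => -[] *; split; nia. Qed.

Lemma corner_in_cone (m : int) : (maxn n0 n1)%:Z <= m ->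
  in_cone (-1, m) /\ in_cone (m, -1).
Proof. by move=> hm; rewrite /in_cone /transfer /=; split; split; nia. Qed.

Lemma jump_in_cone (s : int * int) : in_cone s -> in_cone (jump s).
Proof.
move=> [_ _ /transfer_max_ge hmax]; rewrite /jump.
case: (transfer s) hmax => a b /= hmax.
by case: ifP => hab; [apply: (corner_in_cone _).1 | apply: (corner_in_cone _).2];
  lia.
Qed.

Lemma next_in_cone (z : bool) (s : int * int) : in_cone s -> in_cone (next z s).
Proof. by case: z; [apply: jump_in_cone | apply: transfer_in_cone]. Qed.

Lemma next_below_transfer (z : bool) (s : int * int) : in_cone s ->
  (next z s).1 <= (transfer s).1 /\ (next z s).2 <= (transfer s).2.
Proof.
case: z => [[ha hb _]|_]; last by split.
rewrite /next /jump; case: (transfer s) ha hb => a b /= ha hb.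
by case: ifP => hab /=; split; lia.
Qed.

Lemma next_ge0 (z : bool) (s : int * int) : in_cone s ->
  (0 <= (next z s).1) && (0 <= (next z s).2) = ~~ z.
Proof.
case: z => [[ha hb _]|[ha hb _]]; last by rewrite /= ha hb.
rewrite /next /jump; case: (transfer s) ha hb => a b /= ha hb.
by case: ifP => /=; rewrite ?andbF.
Qed.

Section Witness.

Variables (r : nat) (Z : pred nat).

Fixpoint orbit (l : nat) : int * int :=
  if l is l'.+1 then next (Z l) (orbit l') else (1, 0).

Definition trajectory (l : nat) : int * int :=
  if (l < r)%N then orbit l else (0, 0).

Definition witness_eta (l : nat) : nat :=
  if (0 < l <= r)%N then absz (deficit trajectory l).1 else 0%N.

Definition witness_omega (l : nat) : nat :=
  if (0 < l <= r)%N then absz (deficit trajectory l).2 else 0%N.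

Lemma orbit_in_cone (l : nat) : in_cone (orbit l).
Proof.
elim: l => [|l IHl] /=; last exact: next_in_cone.
by rewrite /in_cone /transfer /=; split; lia.
Qed.

Lemma deficit_trajectory_ge0 (l : nat) : (0 < l <= r)%N ->
  0 <= (deficit trajectory l).1 /\ 0 <= (deficit trajectory l).2.
Proof.
case: l => // l /andP[_ hl]; rewrite /deficit /trajectory succnK hl.
have hcone := orbit_in_cone l.
case: ifP => _.
  by have [] := next_below_transfer (Z l.+1) hcone => /=; lia.
by case: hcone; rewrite !subr0.
Qed.

Lemma witness_eq0 (i : nat) : (r < i)%N ->
  witness_eta i = 0%N /\ witness_omega i = 0%N.
Proof. by move=> hi; rewrite /witness_eta /witness_omega (leqNgt i r) hi andbF. Qed.

Lemma witness_fin_supp : fin_supp witness_eta /\ fin_supp witness_omega.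
Proof. by split; exists r => i /witness_eq0 []. Qed.

Hypothesis r_gt0 : (0 < r)%N.

Lemma witness_K (l : nat) : (l <= r)%N ->
  Kplus witness_eta witness_omega n0 n1 l =
    (trajectory l).1 + (trajectory l).2 /\
  Kminus witness_eta witness_omega n0 n1 l =
    (trajectory l).1 - (trajectory l).2.
Proof.
apply: Kplus_Kminus_deficit => [|i hi]; first by rewrite /trajectory r_gt0.
have [he hw] := deficit_trajectory_ge0 hi.
by rewrite /witness_eta /witness_omega hi !gez0_abs.
Qed.

Lemma witness_rank : rank_is witness_eta witness_omega r.
Proof.
split=> //; split; last exact: witness_eq0.
have [ha hb _] := orbit_in_cone r.-1.
have [_ _ hsum] := transfer_in_cone (orbit_in_cone r.-1).
rewrite /witness_eta /witness_omega r_gt0 leqnn /deficit /trajectory ltnn.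
rewrite ltn_predL r_gt0 /= !subr0.
by move: ha hb hsum; rewrite /transfer /=; lia.
Qed.

Lemma witness_K_rank :
  Kplus witness_eta witness_omega n0 n1 r = 0 /\
  Kminus witness_eta witness_omega n0 n1 r = 0.
Proof. by have [-> ->] := witness_K (leqnn r); rewrite /trajectory ltnn. Qed.

Lemma witness_pattern (l : nat) : (1 <= l)%N -> (l <= r - 1)%N ->
  ~ (`|Kminus witness_eta witness_omega n0 n1 l| <=
       Kplus witness_eta witness_omega n0 n1 l) <-> Z l.
Proof.
case: l => // l _ hl.
have [-> ->] := witness_K (leq_trans hl (leq_subr 1 r)).
rewrite normB_le_add /trajectory ifT; last by lia.
rewrite [orbit _]/= next_ge0; last exact: orbit_in_cone.
by case: (Z l.+1); split=> // /(_ isT).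
Qed.

End Witness.

End Dynamics.

Theorem mainTheorem8 (n0 n1 r : nat) (Z : pred nat) :
  (0 < n0)%N -> (0 < n1)%N -> (1 < maxn n0 n1)%N -> (1 < r)%N ->
  (forall l : nat, Z l -> (1 <= l)%N /\ (l <= r - 1)%N) ->
  admissible n0 n1 r Z.
Proof.
(* Only Z 1, ..., Z (r - 1) are ever consulted. *)
move=> n0_gt0 n1_gt0 max_gt1 /ltnW r_gt0 _.
have [Kp Km] := witness_K_rank n0_gt0 n1_gt0 max_gt1 Z r_gt0.
exists (witness_eta n0 n1 r Z), (witness_omega n0 n1 r Z); split=> //.
- exact: witness_fin_supp.
- exact: witness_rank.
- exact: witness_pattern.
Qed.
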